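(* Let $G$ be a $(C_4,\text{diamond})$-free graph and $1\le k\le |V(G)|-1$. Let $e=ab$ be an edge of $G$ such that $G\setminus\{a,b\}$ is connected. Then the set of edges $AB$ of $F_k(G)$ with $A\triangle B=\{a,b\}$ forms a ladder class of $F_k(G)$.
   Context: $F_k(G)$ is the graph on the $k$-subsets of $V(G)$ with $A,B$ adjacent iff $A\triangle B$ is an edge of $G$. A diamond is $K_4$ minus an edge; $(C_4,\text{diamond})$-free means no induced $4$-cycle and no induced diamond. A ladder is a graph isomorphic to $K_2\square P_m$, $m\ge1$ (with $K_2$ on $\{x,y\}$ and $P_m$ the path $v_1\cdots v_{m+1}$); for $m\ge2$ its rungs are the edges $(x,v_i)(y,v_i)$, and for $m=1$ the rungs may be either pair of disjoint edges. Two edges of a graph $F$ are connected by a ladder if some induced subgraph of $F$ isomorphic to a ladder has them as rungs; the ladder classes are the equivalence classes of the (smallest equivalence relation containing) this relation on $E(F)$. *)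

From Stdlib Require Import Relation_Operators.
From mathcomp Require Import all_boot.
Set Implicit Arguments. Unset Strict Implicit. Unset Printing Implicit Defensive.

Definition simple_graph (V : finType) (r : rel V) : Prop :=
  symmetric r /\ irreflexive r.

Definition induced_embedding (U V : finType) (rU : rel U) (r : rel V)
  (f : U -> V) : Prop :=
  injective f /\ forall u v, r (f u) (f v) = rU u v.

Definition induced_sub (U V : finType) (rU : rel U) (r : rel V) : Prop :=
  exists f : U -> V, induced_embedding rU r f.

Definition C4_rel : rel 'I_4 :=
  fun u v => ((val u).+1 %% 4 == val v) || ((val v).+1 %% 4 == val u).

Definition diamond_rel : rel 'I_4 :=
  fun u v => (u != v) &&
    ~~ (((val u == 2) && (val v == 3)) || ((val u == 3) && (val v == 2))).

Definition C4_diamond_free (V : finType) (r : rel V) : Prop :=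
  ~ induced_sub C4_rel r /\ ~ induced_sub diamond_rel r.

Definition edges (V : finType) (r : rel V) : {set {set V}} :=
  [set e : {set V} | [exists x, exists y, r x y && (e == [set x; y])]].

Definition symdiff (T : finType) (A B : {set T}) : {set T} :=
  (A :\: B) :|: (B :\: A).

Definition kset (T : finType) (k : nat) := {A : {set T} | #|A| == k}.

Definition Fk_rel (T : finType) (g : rel T) (k : nat) : rel (kset T k) :=
  fun A B => symdiff (val A) (val B) \in edges g.

(* Ladder K2 [] P_m on bool * 'I_(m+1): K2 on bool, path v_0 ... v_m. *)
Definition ladder_rel (m : nat) : rel (bool * 'I_m.+1) :=
  fun x y => ((x.1 == y.1) && (((val x.2).+1 == val y.2) || ((val y.2).+1 == val x.2)))
          || ((x.1 != y.1) && (x.2 == y.2)).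

(* Two edges connected by a ladder: they are rungs of an induced ladder.
   For m >= 2 the rungs are the edges (x,v_i)(y,v_i); for m = 1 the rungs may
   be either pair of disjoint edges of the 4-cycle. *)
Definition ladder_connected (V : finType) (r : rel V) (e1 e2 : {set V}) : Prop :=
  exists m : nat, 1 <= m /\
  exists f : bool * 'I_m.+1 -> V, induced_embedding (@ladder_rel m) r f /\
   ((exists i j : 'I_m.+1,
       e1 = [set f (false, i); f (true, i)] /\ e2 = [set f (false, j); f (true, j)])
    \/
    (m = 1 /\ exists i j : 'I_m.+1, val i = 0 /\ val j = 1 /\
       e1 = [set f (false, i); f (false, j)] /\ e2 = [set f (true, i); f (true, j)])).

Definition ladder_equiv (V : finType) (r : rel V) : {set V} -> {set V} -> Prop :=
  clos_refl_sym_trans {set V} (@ladder_connected V r).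

Definition ladder_class (V : finType) (r : rel V) (C : {set {set V}}) : Prop :=
  exists e0, e0 \in edges r /\
    forall e, e \in C <-> (e \in edges r /\ ladder_equiv r e0 e).

Definition connected_minus2 (T : finType) (g : rel T) (a b : T) : Prop :=
  forall x y, x \notin [set a; b] -> y \notin [set a; b] ->
    connect [rel u v | g u v && (u \notin [set a; b]) && (v \notin [set a; b])] x y.
Arguments Fk_rel {T} g k.

From Stdlib Require Import Relation_Operators.
From mathcomp Require Import all_boot zify.
Set Implicit Arguments. Unset Strict Implicit. Unset Printing Implicit Defensive.

(* Label every edge AB of F_k(G) by the edge A△B of G.  In an induced 4-cycle
   of F_k(G) opposite edges carry the same label, because in a (C4, diamond)-free
   graph two non-adjacent vertices have at most one common neighbour.  A ladder
   is a chain of induced 4-cycles whose rungs are opposite edges, so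
   ladder-equivalent edges have the same label.  Conversely, moving a token
   along an edge xy of G - {a, b} turns the ab-labelled edge {A, A - a + b} into
   {A - x + y, A - x + y - a + b} through an induced 4-cycle, and since
   G - {a, b} is connected such moves carry any k-set containing a but not b to
   any other one. *)

Section Symdiff.

Variable T : finType.
Implicit Types A B C D : {set T}.

Lemma in_symdiff A B v : (v \in symdiff A B) = (v \in A) (+) (v \in B).
Proof. by rewrite !inE; case: (v \in A); case: (v \in B). Qed.

Lemma symdiffC A B : symdiff A B = symdiff B A.
Proof. by apply/setP => v; rewrite !in_symdiff addbC. Qed.

Lemma symdiff_trans A B C : symdiff (symdiff A B) (symdiff B C) = symdiff A C.
Proof.
by apply/setP => v; rewrite !in_symdiff addbA -[_ (+) (v \in B)]addbA addbb addbF.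
Qed.

Lemma symdiffss A : symdiff A A = set0.
Proof. by apply/setP => v; rewrite in_symdiff addbb inE. Qed.

Lemma symdiff_eq0 A B : (symdiff A B == set0) = (A == B).
Proof.
apply/eqP/eqP => [/setP AB|->]; last exact: symdiffss.
by apply/setP => v; move: (AB v); rewrite in_symdiff inE; case: (v \in A); case: (v \in B).
Qed.

Lemma symdiffK A B : symdiff A (symdiff A B) = B.
Proof. by apply/setP => v; rewrite !in_symdiff addKb. Qed.

Lemma symdiff_inj A B C : symdiff A B = symdiff A C -> B = C.
Proof. by move=> ABC; rewrite -(symdiffK A B) ABC symdiffK. Qed.

Lemma symdiff_rot A B C D :
  (symdiff A B == symdiff D C) = (symdiff B C == symdiff A D).
Proof.
apply/eqP/eqP => /setP E; apply/setP => v; move: (E v); rewrite !in_symdiff;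
  by case: (v \in A); case: (v \in B); case: (v \in C); case: (v \in D).
Qed.

Lemma symdiff_set2 (c x y : T) :
  c != x -> c != y -> x != y -> symdiff [set c; x] [set c; y] = [set x; y].
Proof.
move=> cx cy xy; apply/setP => v; rewrite in_symdiff !inE.
case: (eqVneq v c) => [->|_] /=; first by rewrite (negbTE cx) (negbTE cy).
by case: (eqVneq v x) => [->|//]; rewrite (negbTE xy).
Qed.

End Symdiff.

Lemma card_setD_sym (T : finType) (A B : {set T}) :
  #|A| = #|B| -> #|A :\: B| = #|B :\: A|.
Proof. by move=> AB; rewrite !cardsD AB setIC. Qed.

Lemma set2_eq_cases (T : finType) (P Q A B : T) :
  [set P; Q] = [set A; B] -> (P = A /\ Q = B) \/ (P = B /\ Q = A).
Proof.
move=> E; have := set21 P Q; have := set22 P Q; have := set21 A B; have := set22 A B.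
rewrite -{1 2}E {3 4}E !inE.
by do 4![case/orP=> /eqP ?]; subst; first [by left | by right].
Qed.

Section SimpleGraph.

Variables (T : finType) (g : rel T).
Hypotheses (g_sym : symmetric g) (g_irr : irreflexive g).

Lemma edge_neq x y : g x y -> x != y.
Proof. by apply: contraTneq => ->; rewrite g_irr. Qed.

Lemma mem_edges x y : g x y -> [set x; y] \in edges g.
Proof.
by move=> gxy; rewrite inE; apply/existsP; exists x; apply/existsP; exists y; rewrite gxy eqxx.
Qed.

Lemma edgesP D v : D \in edges g -> v \in D -> exists2 w, D = [set v; w] & g v w.
Proof.
rewrite inE => /existsP[x /existsP[y /andP[gxy /eqP ->]]] /set2P[->|->].
  by exists y.
by exists x; rewrite 1?setUC // g_sym.
Qed.

Lemma card_edges D : D \in edges g -> #|D| = 2.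
Proof.
by rewrite inE => /existsP[x /existsP[y /andP[/edge_neq xy /eqP ->]]]; rewrite cards2 xy.
Qed.

Lemma notin_edges3 (D : {set T}) x y z :
  x \in D -> y \in D -> z \in D -> x != y -> y != z -> z != x -> D \notin edges g.
Proof.
move=> xD yD zD xy yz zx; apply: contraTN isT => /card_edges D2.
suff : 2 < #|D| by rewrite D2.
by apply/card_gt2P; exists x, y, z.
Qed.

Lemma symdiff_edges_path E E' x y :
  E \in edges g -> E' \in edges g -> symdiff E E' = [set x; y] -> x != y -> ~~ g x y ->
  exists2 z, g x z /\ g z y &
    (E = [set x; z] /\ E' = [set z; y]) \/ (E = [set z; y] /\ E' = [set x; z]).
Proof.
wlog xE : E E' / x \in E => [wlog|] EE E'E EE' xy nxy.
  case xE: (x \in E); first exact: wlog.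
  have xE' : x \in E' by move/setP/(_ x): EE'; rewrite in_symdiff xE !inE eqxx.
  have [z gxzy EE'z] := wlog E' E xE' E'E EE (etrans (symdiffC _ _) EE') xy nxy.
  by exists z => //; case: EE'z => -[-> ->]; [right | left].
have [z Exz gxz] := edgesP EE xE.
have zy : z != y by apply: contraNneq nxy => <-.
have xz := edge_neq gxz.
have E'z : z \in E'.
  move/setP/(_ z): EE'; rewrite in_symdiff Exz !inE eqxx eq_sym (negbTE xz) (negbTE zy).
  by case: (z \in E').
have E'y : y \in E'.
  move/setP/(_ y): EE'; rewrite in_symdiff Exz !inE eqxx orbT eq_sym (negbTE xy).
  by rewrite eq_sym (negbTE zy); case: (y \in E').
have [w E'zw gzw] := edgesP E'E E'z.
move: E'y; rewrite E'zw => /set2P[yz|->]; first by rewrite yz eqxx in zy.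
by exists z; [split | left].
Qed.

Lemma induced_sub_tuple n (rU : rel 'I_n) (s : n.-tuple T) :
  uniq s -> (forall i j, g (tnth s i) (tnth s j) = rU i j) -> induced_sub rU g.
Proof. by move=> /tuple_uniqP s_inj s_rel; exists (tnth s). Qed.

Hypothesis g_free : C4_diamond_free g.

(* The two common neighbours c, d of x and y span an induced diamond if they
   are adjacent and an induced 4-cycle otherwise. *)
Lemma common_neighbour_unique x y c d :
  x != y -> ~~ g x y -> g x c -> g c y -> g x d -> g d y -> c = d.
Proof.
move=> xy nxy xc cy xd dy; apply/eqP/negPn/negP => cd.
have [nC4 nD] := g_free.
have s_uniq (s : 4.-tuple T) : perm_eq s [:: x; y; c; d] -> uniq s.
  move/perm_uniq => ->; rewrite /= !inE !negb_or xy (edge_neq xc) (edge_neq xd) cd.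
  by rewrite eq_sym (edge_neq cy) eq_sym (edge_neq dy).
have g_sym_xycd := (g_sym c x, g_sym y c, g_sym d x, g_sym y d, g_sym d c, g_sym y x).
case cd_edge: (g c d).
  apply: nD (induced_sub_tuple (s := [tuple c; d; x; y]) _ _).
    by apply: s_uniq; rewrite (perm_catCA [:: c; d] [:: x; y] [::]).
  move=> [[|[|[|[|i]]]] Hi] // [[|[|[|[|j]]]] Hj] //=; rewrite !(tnth_nth x) /diamond_rel /=;
    by rewrite ?g_irr ?g_sym_xycd ?xc ?cy ?xd ?dy ?cd_edge ?(negbTE nxy).
apply: nC4 (induced_sub_tuple (s := [tuple x; c; y; d]) _ _).
  by apply: s_uniq; rewrite perm_cons (perm_catCA [:: c] [:: y] [:: d]).
move=> [[|[|[|[|i]]]] Hi] // [[|[|[|[|j]]]] Hj] //=; rewrite !(tnth_nth x) /C4_rel /=;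
  by rewrite ?g_irr ?g_sym_xycd ?xc ?cy ?xd ?dy ?cd_edge ?(negbTE nxy).
Qed.

End SimpleGraph.

Definition induced_square (V : finType) (r : rel V) (P Q R S : V) : bool :=
  [&& [&& r P Q, r Q R, r R S & r S P], ~~ r P R, ~~ r Q S, P != R & Q != S].

Section Ladders.

Variables (V : finType) (r : rel V).

Lemma ladder_induced_square m (f : bool * 'I_m.+1 -> V) (i j : 'I_m.+1) :
  induced_embedding (@ladder_rel m) r f -> (val i).+1 = val j ->
  induced_square r (f (false, i)) (f (false, j)) (f (true, j)) (f (true, i)).
Proof.
move=> [f_inj f_rel] ij.
rewrite /induced_square !f_rel !(inj_eq f_inj) /ladder_rel /= ij !eqxx /=.
by rewrite -!val_eqE /= -ij !(gtn_eqF (ltnSn _)) !(ltn_eqF (ltnSn _)) ?orbT.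
Qed.

Hypothesis r_sym : symmetric r.

Lemma induced_square_rot P Q R S :
  induced_square r P Q R S -> induced_square r Q R S P.
Proof.
move=> /and5P[/and4P[PQ QR RS SP] nPR nQS PR QS].
by rewrite /induced_square QR RS SP PQ nQS r_sym nPR QS eq_sym PR.
Qed.

Hypothesis r_irr : irreflexive r.

Lemma square_ladder_connected P Q R S :
  induced_square r P Q R S -> ladder_connected r [set P; S] [set Q; R].
Proof.
move=> /and5P[/and4P[PQ QR RS SP] nPR nQS PR QS].
have neq := (negbTE (edge_neq r_irr PQ), negbTE (edge_neq r_irr QR),
  negbTE (edge_neq r_irr RS), negbTE (edge_neq r_irr SP), negbTE PR, negbTE QS).
have adj := (PQ, QR, RS, SP, r_sym Q P, r_sym R Q, r_sym S R, r_sym P S).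
have nadj := (negbTE nPR, negbTE nQS, r_sym R P, r_sym S Q).
pose f (u : bool * 'I_2) :=
  if u.1 then (if val u.2 == 0 then S else R) else (if val u.2 == 0 then P else Q).
exists 1; split => //; exists f; split; [split|].
- move=> [[] [[|[|i]] Hi]] [[] [[|[|j]] Hj]] //=; rewrite /f /= => e;
    by [congr pair; apply: val_inj | move/eqP: e; rewrite ?neq // eq_sym ?neq].
- move=> [[] [[|[|i]] Hi]] [[] [[|[|j]] Hj]] //=;
    by rewrite /f /ladder_rel /= -?val_eqE /= ?r_irr ?adj ?nadj.
- by left; exists ord0, ord_max.
Qed.

End Ladders.

Section TokenGraph.

Variables (T : finType) (g : rel T) (k : nat).
Hypotheses (g_sym : symmetric g) (g_irr : irreflexive g).

Local Notation Fk := (Fk_rel g k).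
Local Notation label P Q := (symdiff (val P) (val Q)).

Lemma Fk_sym : symmetric Fk.
Proof. by move=> P Q; rewrite /Fk_rel symdiffC. Qed.

Lemma Fk_irr : irreflexive Fk.
Proof.
move=> P; apply/negbTE/negP; rewrite /Fk_rel symdiffss.
by move/(card_edges g_irr); rewrite cards0.
Qed.

Hypothesis g_free : C4_diamond_free g.

(* If the labels {c, x} and {c, y} of two consecutive edges meet, then x and y
   are non-adjacent (P R is not an edge), and the other two labels form a path
   x z y; z = c by uniqueness of common neighbours. *)
Lemma Fk_square_shared P Q R S c : induced_square Fk P Q R S ->
  c \in label P Q -> c \in label Q R -> label P Q = label S R.
Proof.
case/and5P => /and4P[PQ QR RS SP] nPR _ PR QS cPQ cQR.
have [x PQcx gcx] := edgesP g_sym PQ cPQ.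
have [y QRcy gcy] := edgesP g_sym QR cQR.
have xy : x != y.
  apply: contra_neq PR => xy; apply/val_inj/eqP; rewrite -symdiff_eq0.
  by rewrite -(symdiff_trans _ (val Q)) PQcx QRcy xy symdiffss.
have PRxy : label P R = [set x; y].
  rewrite -(symdiff_trans _ (val Q)) PQcx QRcy.
  by rewrite symdiff_set2 ?(edge_neq g_irr gcx, edge_neq g_irr gcy).
have nxy : ~~ g x y by apply: contra nPR => gxy; rewrite /Fk_rel PRxy mem_edges.
have RPxy : symdiff (label R S) (label S P) = [set x; y] by rewrite symdiff_trans symdiffC.
have [z [gxz gzy] RS_SP] := symdiff_edges_path g_sym g_irr RS SP RPxy xy nxy.
have zc : z = c.
  by apply: (common_neighbour_unique g_sym g_irr g_free xy nxy); rewrite // g_sym.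
case: RS_SP => -[RSxz _]; first by rewrite (symdiffC (val S)) RSxz zc PQcx setUC.
have : label R S = label R Q by rewrite RSxz zc -QRcy symdiffC.
by move/symdiff_inj/val_inj => SQ; rewrite SQ eqxx in QS.
Qed.

Lemma Fk_square_disjoint P Q R S : induced_square Fk P Q R S ->
  label P Q :&: label Q R = set0 -> label S P :&: label P Q = set0 ->
  label P Q = label S R.
Proof.
case/and5P => /and4P[PQ _ RS _] _ _ _ _ PQR SPQ; apply/eqP.
rewrite eqEcard (card_edges g_irr PQ) (symdiffC (val S)) (card_edges g_irr RS) leqnn andbT.
apply/subsetP => v vPQ; move/setP/(_ v): PQR; move/setP/(_ v): SPQ; move: vPQ.
rewrite !(in_setI, in_set0, in_symdiff).
by case: (v \in val P); case: (v \in val Q); case: (v \in val R); case: (v \in val S).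
Qed.

Lemma Fk_square_parallel P Q R S : induced_square Fk P Q R S -> label P Q = label S R.
Proof.
move=> sq.
case: (set_0Vmem (label P Q :&: label Q R)) => [PQR | [c /setIP[cPQ cQR]]];
  last exact: Fk_square_shared sq cPQ cQR.
case: (set_0Vmem (label S P :&: label P Q)) => [SPQ | [c /setIP[cSP cPQ]]];
  first exact: Fk_square_disjoint.
(* Rotated three times, the square has S P and P Q as its first two labels. *)
have rot := induced_square_rot Fk_sym.
have sq3 := rot _ _ _ _ (rot _ _ _ _ (rot _ _ _ _ sq)).
by apply/eqP; rewrite -symdiff_rot; apply/eqP; exact: Fk_square_shared sq3 cSP cPQ.
Qed.

End TokenGraph.

Definition label_class (T : finType) (g : rel T) (k : nat) (c : {set T}) :
    {set {set kset T k}} :=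
  [set e | [exists A, exists B, (e == [set A; B]) && Fk_rel g k A B &&
                                (symdiff (val A) (val B) == c)]].

Section LabelClasses.

Variables (T : finType) (g : rel T) (k : nat).
Hypotheses (g_sym : symmetric g) (g_irr : irreflexive g) (g_free : C4_diamond_free g).

Local Notation Fk := (Fk_rel g k).
Local Notation label P Q := (symdiff (val P) (val Q)).

Lemma label_class_pair c P Q :
  Fk P Q -> ([set P; Q] \in label_class g k c) = (label P Q == c).
Proof.
move=> PQ; rewrite inE; apply/existsP/eqP => [[A /existsP[B]]|<-]; last first.
  by exists P; apply/existsP; exists Q; rewrite !eqxx PQ.
case/andP=> /andP[/eqP/set2_eq_cases PQAB _] /eqP <-.
by case: PQAB => -[-> ->]; rewrite // symdiffC.
Qed.

Lemma ladder_connected_label_class c e1 e2 :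
  ladder_connected Fk e1 e2 -> (e1 \in label_class g k c) = (e2 \in label_class g k c).
Proof.
case=> m [_ [f [f_emb rungs]]]; have [_ f_rel] := f_emb.
have rung n : n <= m ->
    label (f (false, inord n)) (f (true, inord n)) = label (f (false, ord0)) (f (true, ord0)).
  elim: n => [|n IHn] Hn; first by rewrite (inord_val ord0).
  rewrite -IHn ?(ltnW Hn) //.
  have ij : (inord n : 'I_m.+1).+1 = (inord n.+1 : 'I_m.+1) :> nat.
    by rewrite (inordK (ltnW Hn)) (inordK (Hn : n.+1 < m.+1)).
  exact (Fk_square_parallel g_sym g_irr g_free
    (induced_square_rot (@Fk_sym _ g k) (ladder_induced_square f_emb ij))).
case: rungs => [[i [j [-> ->]]] | [_ [i [j [i0 [j1 [-> ->]]]]]]].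
  rewrite !label_class_pair ?f_rel /ladder_rel /= ?eqxx //.
  by rewrite -(inord_val i) -(inord_val j) !rung // -ltnS.
rewrite !label_class_pair ?f_rel /ladder_rel /= ?eqxx ?i0 ?j1 //.
by rewrite (Fk_square_parallel g_sym g_irr g_free (ladder_induced_square f_emb _)) ?i0 ?j1.
Qed.

Lemma ladder_equiv_label_class c e1 e2 :
  ladder_equiv Fk e1 e2 -> (e1 \in label_class g k c) = (e2 \in label_class g k c).
Proof.
by elim=> [? ? /ladder_connected_label_class | | ? ? _ -> | ? ? ? _ -> _ ->].
Qed.

End LabelClasses.

(* Moving the token at x to y; the junk value A is returned when x \notin A or
   y \in A. *)
Definition kmove (T : finType) (k : nat) (A : kset T k) (x y : T) : kset T k :=
  odflt A (insub (y |: (val A :\ x))).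

Section Moves.

Variables (T : finType) (k : nat).
Implicit Types (A B : kset T k) (x y : T).

Lemma card_kset A : #|val A| = k.
Proof. exact: eqP (valP A). Qed.

Lemma val_kmove A x y :
  x \in val A -> y \notin val A -> val (kmove A x y) = y |: (val A :\ x).
Proof.
move=> xA yA; rewrite /kmove insubT //= cardsU1 !inE (negbTE yA) andbF.
by have := card_kset A; rewrite (cardsD1 x) xA => /eqP.
Qed.

Lemma in_kmove A x y v : x \in val A -> y \notin val A ->
  (v \in val (kmove A x y)) = (v == y) || (v != x) && (v \in val A).
Proof. by move=> xA yA; rewrite val_kmove // !inE. Qed.

Lemma kmove_trans A x y z : x \in val A -> z \notin val A -> y \notin val A -> y != z ->
  kmove (kmove A x z) z y = kmove A x y.
Proof.
move=> xA zA yA yz; have xz : x != z by apply: contraNneq zA => <-.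
have zAxz : z \in val (kmove A x z) by rewrite in_kmove // eqxx.
have yAxz : y \notin val (kmove A x z) by rewrite in_kmove // (negbTE yz) (negbTE yA) andbF.
apply: val_inj; apply/setP => v; rewrite in_kmove // !in_kmove //.
by case: (eqVneq v y) => // _; case: (eqVneq v z) => [->|] //=; rewrite (negbTE zA) andbF.
Qed.

Lemma kmove_shift A x y z : x \in val A -> z \in val A -> y \notin val A -> x != z ->
  kmove (kmove A z y) x z = kmove A x y.
Proof.
move=> xA zA yA xz; have zy : z != y by apply: contraNneq yA => <-.
have xAzy : x \in val (kmove A z y) by rewrite in_kmove // xz xA orbT.
have zAzy : z \notin val (kmove A z y) by rewrite in_kmove // (negbTE zy) eqxx.
apply: val_inj; apply/setP => v; rewrite in_kmove // !in_kmove //.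
case: (eqVneq v z) => [->|_]; first by rewrite (negbTE zy) eq_sym xz zA.
by case: (eqVneq v y) => [->|] //=; rewrite andbT; apply: contraNneq yA => ->.
Qed.

Lemma symdiff_kmove A x y :
  x \in val A -> y \notin val A -> symdiff (val A) (val (kmove A x y)) = [set x; y].
Proof.
move=> xA yA; apply/setP => v; rewrite in_symdiff val_kmove // !inE.
have xy : x != y by apply: contraNneq yA => <-.
case: (eqVneq v x) => [->|_] /=; first by rewrite xA (negbTE xy).
by case: (eqVneq v y) => [->|_]; rewrite ?(negbTE yA) ?addbb.
Qed.

Lemma kmove_symdiff A B x y :
  symdiff (val A) (val B) = [set x; y] -> x \in val A -> y \notin val A /\ B = kmove A x y.
Proof.
move=> ABxy xA; have vB : val B = symdiff (val A) [set x; y] by rewrite -ABxy symdiffK.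
have yA : y \notin val A.
  apply/negP => yA; suff /proper_card : val B \proper val A by rewrite !card_kset ltnn.
  apply/properP; split; last by exists x; rewrite // vB in_symdiff xA !inE eqxx.
  apply/subsetP => v; rewrite vB in_symdiff !inE.
  by case: eqP => [->|_]; rewrite ?xA //; case: eqP => [->|_]; rewrite ?yA ?addbF.
by split=> //; apply: val_inj; rewrite vB -(symdiff_kmove xA yA) symdiffK.
Qed.

Lemma kset_separating (a b : T) :
  a != b -> 1 <= k <= #|T| - 1 -> exists2 A : kset T k, a \in val A & b \notin val A.
Proof.
move=> ab /andP[k1 kT].
have : k.-1 <= #|~: [set a; b]| by have := cardsC [set a; b]; rewrite cards2 ab; lia.
case/card_geqP => s [s_uniq s_size s_ab].
have a_s : a \notin s by apply/negP => /s_ab; rewrite !inE eqxx.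
have cardA : #|a |: [set v in s]| == k.
  by rewrite cardsU1 inE a_s cardsE (card_uniqP s_uniq) s_size; apply/eqP; lia.
exists (exist _ (a |: [set v in s]) cardA : kset T k); rewrite /= !inE ?eqxx //.
by rewrite negb_or eq_sym ab; apply/negP => /s_ab; rewrite !inE eqxx orbT.
Qed.

End Moves.

Definition move_edge (T : finType) (k : nat) (A : kset T k) (x y : T) : {set kset T k} :=
  [set A; kmove A x y].

Section MoveEdges.

Variables (T : finType) (g : rel T) (k : nat) (a b : T).
Hypotheses (g_irr : irreflexive g) (gab : g a b).

Local Notation Fk := (Fk_rel g k).
Local Notation label P Q := (symdiff (val P) (val Q)).
Local Notation g_ab := [rel u v | g u v && (u \notin [set a; b]) && (v \notin [set a; b])].

Lemma Fk_kmove (A : kset T k) x y :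
  g x y -> x \in val A -> y \notin val A -> Fk A (kmove A x y).
Proof. by move=> gxy xA yA; rewrite /Fk_rel symdiff_kmove // mem_edges. Qed.

Lemma move_edge_label_class (A : kset T k) :
  a \in val A -> b \notin val A -> move_edge A a b \in label_class g k [set a; b].
Proof. by move=> aA bA; rewrite label_class_pair ?Fk_kmove ?symdiff_kmove. Qed.

Lemma label_class_move_edge e : e \in label_class g k [set a; b] ->
  exists A : kset T k, [/\ a \in val A, b \notin val A & e = move_edge A a b].
Proof.
rewrite inE => /existsP[P /existsP[Q /andP[/andP[/eqP -> _] /eqP PQab]]].
case/boolP: (a \in val P) => aP.
  by have [bP ->] := kmove_symdiff PQab aP; exists P.
have aQ : a \in val Q by move/setP/(_ a): PQab; rewrite in_symdiff (negbTE aP) set21.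
rewrite symdiffC in PQab; have [bQ ->] := kmove_symdiff PQab aQ.
by exists Q; rewrite /move_edge setUC.
Qed.

Lemma kmove_induced_square (A : kset T k) x y :
  a \in val A -> b \notin val A -> x \in val A -> y \notin val A -> g x y ->
  x \notin [set a; b] -> y \notin [set a; b] ->
  induced_square Fk A (kmove A x y) (kmove (kmove A x y) a b) (kmove A a b).
Proof.
move=> aA bA xA yA gxy xab yab.
set A1 := kmove A a b; set A2 := kmove A x y; set A3 := kmove A2 a b.
have [xa xb] : x != a /\ x != b by apply/norP; rewrite -in_set2.
have [ya yb] : y != a /\ y != b by apply/norP; rewrite -in_set2.
have aA2 : a \in val A2 by rewrite in_kmove // aA (eq_sym a x) xa orbT.
have bA2 : b \notin val A2 by rewrite in_kmove // (negbTE bA) andbF orbF (eq_sym b y).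
have l01 : label A A1 = [set a; b] := symdiff_kmove aA bA.
have l02 : label A A2 = [set x; y] := symdiff_kmove xA yA.
have l23 : label A2 A3 = [set a; b] := symdiff_kmove aA2 bA2.
have l21 : label A2 A1 = symdiff [set a; b] [set x; y].
  by rewrite -(symdiff_trans _ (val A)) (symdiffC (val A2)) l01 l02 symdiffC.
have l03 : label A A3 = symdiff [set a; b] [set x; y].
  by rewrite -(symdiff_trans _ (val A2)) l02 l23 symdiffC.
have l31 : label A3 A1 = [set x; y].
  by rewrite -(symdiff_trans _ (val A2)) (symdiffC (val A3)) l23 l21 symdiffK.
have a_diag : a \in symdiff [set a; b] [set x; y].
  by rewrite in_symdiff !inE eqxx ![a == _]eq_sym (negbTE xa) (negbTE ya).
have diag_nonedge : symdiff [set a; b] [set x; y] \notin edges g.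
  apply: (notin_edges3 g_irr a_diag (y := b) (z := x) _ _ (edge_neq g_irr gab));
    rewrite ?in_symdiff ?inE ?eqxx //=.
  - by rewrite orbT ![b == _]eq_sym (negbTE xb) (negbTE yb).
  - by rewrite (negbTE xa) (negbTE xb).
  - by rewrite eq_sym.
have diag_neq (P Q : kset T k) : label P Q = symdiff [set a; b] [set x; y] -> P != Q.
  by move=> PQ; apply: contraTneq a_diag => PeQ; rewrite -PQ PeQ symdiffss inE.
rewrite /induced_square /Fk_rel l02 l23 l31 (symdiffC (val A1)) l01 l03 l21.
by rewrite !mem_edges // diag_nonedge (diag_neq _ _ l03) (diag_neq _ _ l21).
Qed.

Lemma move_edge_step (A : kset T k) x y :
  a \in val A -> b \notin val A -> x \in val A -> y \notin val A -> g x y ->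
  x \notin [set a; b] -> y \notin [set a; b] ->
  ladder_equiv Fk (move_edge A a b) (move_edge (kmove A x y) a b).
Proof.
move=> aA bA xA yA gxy xab yab; apply: rst_step.
exact (square_ladder_connected (@Fk_sym _ g k) (Fk_irr g_irr)
  (kmove_induced_square aA bA xA yA gxy xab yab)).
Qed.

(* Move the token at x to the end y of a walk in G - {a, b}.  When the next
   vertex z of the walk is occupied, the token at z is sent on to y first and
   the token at x then takes its place. *)
Lemma move_edge_walk p x (A : kset T k) :
  a \in val A -> b \notin val A -> x \in val A -> path g_ab x p ->
  last x p \notin val A -> last x p \notin [set a; b] ->
  ladder_equiv Fk (move_edge A a b) (move_edge (kmove A x (last x p)) a b).
Proof.
elim: p x A => [|z p IHp] x A aA bA xA; first by rewrite /= xA.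
rewrite /= => /andP[/andP[/andP[gxz xab] zab] zp]; set y := last z p => yA yab.
have [za zb] : z != a /\ z != b by apply/norP; rewrite -in_set2.
have [xa xb] : x != a /\ x != b by apply/norP; rewrite -in_set2.
have xz := edge_neq g_irr gxz.
case/boolP: (z \in val A) => zA.
  have zy : z != y by apply: contraNneq yA => <-.
  rewrite -(kmove_shift xA zA yA xz).
  apply: rst_trans (IHp z A aA bA zA zp yA yab) (move_edge_step _ _ _ _ gxz xab zab).
  - by rewrite in_kmove // aA (eq_sym a z) za orbT.
  - by rewrite in_kmove // (negbTE bA) andbF orbF; apply: contraNneq yab => ->; rewrite set22.
  - by rewrite in_kmove // xz xA orbT.
  - by rewrite in_kmove // (negbTE zy) eqxx.
apply: rst_trans (move_edge_step aA bA xA zA gxz xab zab) _.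
case: (eqVneq y z) => [->|yz]; first exact: rst_refl.
rewrite -(kmove_trans xA zA yA yz); apply: IHp zp _ yab.
- by rewrite in_kmove // aA (eq_sym a x) xa orbT.
- by rewrite in_kmove // (negbTE bA) andbF orbF (eq_sym b z) zb.
- by rewrite in_kmove // eqxx.
- by rewrite in_kmove // (negbTE yz) (negbTE yA) andbF.
Qed.

Hypothesis g_ab_connected : connected_minus2 g a b.

Lemma move_edge_connected (A A' : kset T k) :
  a \in val A -> b \notin val A -> a \in val A' -> b \notin val A' ->
  ladder_equiv Fk (move_edge A a b) (move_edge A' a b).
Proof.
move Dn : #|val A :\: val A'| => n; elim: n A Dn => [|n IHn] A Dn aA bA aA' bA'.
  suff -> : A = A' by exact: rst_refl.
  apply/val_inj/eqP; rewrite eqEcard !card_kset leqnn andbT.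
  by rewrite -setD_eq0 -cards_eq0 Dn.
have [x] : exists x, x \in val A :\: val A' by apply/card_gt0P; rewrite Dn.
rewrite inE => /andP[xA' xA].
have [y] : exists y, y \in val A' :\: val A.
  by apply/card_gt0P; rewrite -card_setD_sym ?Dn // !card_kset.
rewrite inE => /andP[yA yA'].
have xab : x \notin [set a; b].
  rewrite in_set2; apply/norP; split; first by apply: contraNneq xA' => ->.
  by apply: contraNneq bA => <-.
have yab : y \notin [set a; b].
  rewrite in_set2; apply/norP; split; first by apply: contraNneq yA => ->.
  by apply: contraNneq bA' => <-.
have /connectP[p p_path p_last] := g_ab_connected xab yab.
have := move_edge_walk aA bA xA p_path; rewrite -p_last => /(_ yA yab) AB.
apply: rst_trans AB (IHn _ _ _ _ aA' bA'); first rewrite val_kmove //.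
- have -> : (y |: (val A :\ x)) :\: val A' = (val A :\: val A') :\ x.
    apply/setP => v; rewrite !inE; case: (eqVneq v y) => [->|_] /=.
      by rewrite yA' (negbTE yA) !andbF.
    by rewrite andbCA.
  by apply/eqP; rewrite -eqSS -Dn (cardsD1 x (val A :\: val A')) in_setD xA xA'.
- by rewrite in_kmove // aA andbT; apply/orP; right; apply: contraNneq xA' => <-.
- by rewrite in_kmove // (negbTE bA) andbF orbF; apply: contraNneq bA' => ->.
Qed.

End MoveEdges.

Theorem lemma24 (T : finType) (g : rel T) (k : nat) (a b : T) :
  simple_graph g ->
  C4_diamond_free g ->
  1 <= k <= #|T| - 1 ->
  g a b ->
  connected_minus2 g a b ->
  ladder_class (Fk_rel g k)
    [set e : {set kset T k} |
       [exists A, exists B, (e == [set A; B]) && Fk_rel g k A B &&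
                            (symdiff (val A) (val B) == [set a; b])]].
Proof.
move=> [g_sym g_irr] g_free k_range gab g_ab_connected.
change (ladder_class (Fk_rel g k) (label_class g k [set a; b])).
have [A0 aA0 bA0] := kset_separating (edge_neq g_irr gab) k_range.
exists (move_edge A0 a b); split; first exact/mem_edges/Fk_kmove.
move=> e; split => [/label_class_move_edge[A [aA bA ->]] | [_ e0e]].
  split; first exact/mem_edges/Fk_kmove.
  exact: move_edge_connected.
rewrite -(ladder_equiv_label_class g_sym g_irr g_free _ e0e).
exact: move_edge_label_class.
Qed.
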